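(* Let $Y$ and $Z$ be random variables such that $Y$ has a continuous distribution function and $a(Z-b)$ is integer-valued for some real numbers $a>0$ and $b$. If $\sigma_Z^2:=\operatorname{Var}Z<\infty$, then $$d_{KS}(Y,Z)\ge\frac{1}{12a\sigma_Z+8}.$$
   Context: $d_{KS}(Y,Z):=\sup_{x\in\mathbb R}|P(Y\le x)-P(Z\le x)|$. *)

From HB Require Import structures.
From mathcomp Require Import all_boot all_order all_algebra.
From mathcomp Require Import all_classical all_reals all_analysis.
Set Implicit Arguments. Unset Strict Implicit. Unset Printing Implicit Defensive.
Import Order.TTheory GRing.Theory Num.Theory.
Import numFieldNormedType.Exports.
Local Open Scope classical_set_scope.
Local Open Scope ring_scope.

Definition distfun d (T : measurableType d) (R : realType) (P : probability T R)
  (X : {RV P >-> R}) (x : R) : R := fine (cdf X x).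

Definition dKS d1 d2 (T1 : measurableType d1) (T2 : measurableType d2)
  (R : realType) (P1 : probability T1 R) (P2 : probability T2 R)
  (Y : {RV P1 >-> R}) (Z : {RV P2 >-> R}) : R :=
  sup (range (fun x : R => `|distfun Y x - distfun Z x|)).

From HB Require Import structures.
From mathcomp Require Import all_boot all_order all_algebra.
From mathcomp Require Import all_classical all_reals all_analysis.
From mathcomp Require Import ring lra.
Import Order.TTheory GRing.Theory Num.Theory.
Import numFieldNormedType.Exports.
Local Open Scope classical_set_scope.
Local Open Scope ring_scope.

(* Continuity of F_Y bounds every atom of Z by 2 d_KS(Y,Z): the jump of F_Z at
   an atom z survives in F_Z - F_Y.  A lattice variable with step 1/a puts all
   but Var Z / t^2 of its mass (Chebyshev) on the at most 2at lattice points of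
   (E Z - t, E Z + t), so one of these atoms carries mass at least
   (1 - Var Z / t^2) / (2at).  Choosing t >= 2 sigma_Z with 2at an integer at
   most 4a sigma_Z + 2 gives the bound. *)

Section distribution_function.
Context {d} {T : measurableType d} {R : realType} {P : probability T R}.
Variable X : {RV P >-> R}.

Lemma distfunE x : distfun X x = fine (P [set w | X w <= x]).
Proof. by []. Qed.

Lemma measurable_RV_le x : measurable [set w | X w <= x].
Proof.
have -> : [set w | X w <= x] = X @^-1` `]-oo, x].
  by apply/seteqP; split=> w /=; rewrite in_itv.
exact: measurable_funPTI.
Qed.

Lemma measurable_RV_eq x : measurable [set w | X w = x].
Proof. by rewrite -[[set w | X w = x]]/(X @^-1` [set x]); exact: measurable_funPTI. Qed.

Lemma distfun_ge0 x : 0 <= distfun X x.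
Proof. exact: fine_ge0. Qed.

Lemma distfun_le1 x : distfun X x <= 1.
Proof. by rewrite -[1]/(fine 1%E) fine_le ?fin_num_measure ?cdf_le1. Qed.

Lemma atom_le_distfunB x t : t < x ->
  fine (P [set w | X w = x]) <= distfun X x - distfun X t.
Proof.
move=> tx; have mt := measurable_RV_le t; have mx := measurable_RV_eq x.
have disj : [set w | X w <= t] `&` [set w | X w = x] = set0.
  by apply/seteqP; split=> w // [/= wt wx]; move: tx; rewrite -wx ltNge wt.
have mU := measurableU _ _ mt mx; have mle := measurable_RV_le x.
rewrite !distfunE lerBrDl -fineD ?fin_num_measure // -measureU //.
rewrite fine_le ?fin_num_measure // le_measure ?inE //.
by move=> w /= [wt | ->]; [exact: le_trans wt (ltW tx) | ].
Qed.

End distribution_function.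

Section kolmogorov_smirnov.
Context {R : realType}.
Context {d1} {T1 : measurableType d1} {P1 : probability T1 R}.
Context {d2} {T2 : measurableType d2} {P2 : probability T2 R}.
Variables (Y : {RV P1 >-> R}) (Z : {RV P2 >-> R}).

Lemma dist_distfun_le_dKS x : `|distfun Y x - distfun Z x| <= dKS Y Z.
Proof.
apply: ub_le_sup; last by exists x.
exists 1 => _ [y _ <-]; have := distfun_ge0 Y y; have := distfun_le1 Y y.
have := distfun_ge0 Z y; have := distfun_le1 Z y.
by rewrite ler_norml; lra.
Qed.

Lemma dKS_ge0 : 0 <= dKS Y Z.
Proof. exact: le_trans (dist_distfun_le_dKS 0). Qed.

Lemma atom_le_dKS z : continuous (distfun Y) ->
  fine (P2 [set w | Z w = z]) <= 2 * dKS Y Z.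
Proof.
move=> cY; apply/ler_addgt0Pr => e e0.
have /cvgrPdist_lt/(_ e e0)/nbhs_ballP[h /= h0 near_z] := cY z.
have Yz : `|distfun Y z - distfun Y (z - h / 2)| < e.
  apply: near_z; rewrite -ball_normE /= opprB addrC subrK.
  by rewrite ger0_norm ?divr_ge0 ?ltW //; lra.
have := atom_le_distfunB Z z (z - h / 2).
have := dist_distfun_le_dKS z; have := dist_distfun_le_dKS (z - h / 2); move: Yz.
by rewrite ltr_norml !ler_norml; lra.
Qed.

End kolmogorov_smirnov.

Lemma int_in_window (R : archiRealDomainType) (L : R) (N : nat) (k : int) :
  L < k%:~R < L + N%:R ->
  exists2 j : nat, (j < N)%N & k = Num.floor L + 1 + j%:Z.
Proof.
move=> /andP[Lk kLN]; have kL : Num.floor L + 1 <= k.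
  by rewrite lezD1 floor_lt_int.
exists (absz (k - (Num.floor L + 1))%R); last by rewrite gez0_abs ?subr_ge0 // addrC subrK.
rewrite -ltz_nat gez0_abs ?subr_ge0 // -(ltr_int R) rmorphB /= rmorphD /=.
have := lt_succ_floor L; rewrite rmorphD /=; lra.
Qed.

Section lattice_variable.
Context {d} {T : measurableType d} {R : realType} {P : probability T R}.
Context {Z : {RV P >-> R}} {a b : R}.
Hypotheses (a_gt0 : 0 < a) (Z_lattice : forall w, exists k : int, a * (Z w - b) = k%:~R).

(* With t := N / (2a), the window (E Z - t, E Z + t) contains at most N lattice points. *)
Lemma lattice_chebyshev (N : nat) (c : R) : (0 < N)%N ->
  (Z : T -> R) \in Lfun P 2%:E ->
  (forall z, fine (P [set w | Z w = z]) <= c) ->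
  1 <= (2 * a / N%:R) ^+ 2 * fine 'V_P[Z] + N%:R * c.
Proof.
move=> N_gt0 Z2 atom_le_c.
pose t := N%:R / (2 * a); pose mu := fine 'E_P[Z].
have t_gt0 : 0 < t by rewrite divr_gt0 ?ltr0n ?mulr_gt0.
pose L := a * (mu - b) - a * t; pose k0 := Num.floor L + 1.
pose atom (j : nat) := [set w | Z w = b + (k0 + j%:Z)%:~R / a].
pose tail := [set w | t <= `|Z w - mu|].
have mtail : measurable tail.
  rewrite [tail](_ : _ = (fun w => `|Z w - mu|) @^-1` `[t, +oo[).
    have mf : measurable_fun setT (fun w => `|Z w - mu|).
      by apply: measurableT_comp => //; exact: measurable_realfun.measurable_funB.
    by rewrite -[_ @^-1` _]setTI; exact: mf.
  by apply/seteqP; split=> w /=; rewrite in_itv /= andbT.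
have matoms : measurable (\big[setU/set0]_(j < N) atom j).
  by apply: bigsetU_measurable => j _; exact: measurable_RV_eq.
have cover : [set: T] `<=` tail `|` \big[setU/set0]_(j < N) atom j.
  move=> w _; have [|] := leP t `|Z w - mu|; [by left | rewrite ltr_norml => win].
  right; rewrite -bigcup_mkord; have [k Zk] := Z_lattice w.
  have [|j jN kj] := @int_in_window _ L N k.
    have tN : a * t * 2 = N%:R by rewrite /t; field; rewrite gt_eqF.
    move: win => /andP[h1 h2].
    have lo : a * - t < a * (Z w - mu) by rewrite ltr_pM2l.
    have hi : a * (Z w - mu) < a * t by rewrite ltr_pM2l.
    by rewrite -Zk /L; apply/andP; split; lra.
  by exists j => //; rewrite /atom /= -kj -Zk; field; rewrite gt_eqF.
have cover_le : (1 <= P tail + \sum_(j < N) P (atom j))%E.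
  rewrite -(probability_setT P).
  apply: le_trans (le_measure _ _ _ cover) _; rewrite ?inE //; first exact: measurableU.
  apply: le_trans (measureU2 _ mtail matoms) _.
  by rewrite leeD2l // le_mu_bigsetU // => j _; exact: measurable_RV_eq.
have tail_le : (P tail <= ((2 * a / N%:R) ^+ 2 * fine 'V_P[Z])%:E)%E.
  rewrite EFinM fineK ?variance_fin_num // -invf_div -/t exprVn; exact: chebyshev.
have atoms_le : (\sum_(j < N) P (atom j) <= (N%:R * c)%:E)%E.
  apply: le_trans (_ : _ <= \sum_(j < N) c%:E)%E _.
    apply: lee_sum => j _; have matom : measurable (atom j) by exact: measurable_RV_eq.
    by rewrite -[P _]fineK ?fin_num_measure // lee_fin atom_le_c.
  by rewrite sumEFin sumr_const card_ord mulr_natl.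
by rewrite -lee_fin EFinD (le_trans cover_le (leeD tail_le atoms_le)).
Qed.

End lattice_variable.

Theorem lemma5p5 (R : realType)
  (d1 : measure_display) (T1 : measurableType d1) (P1 : probability T1 R)
  (d2 : measure_display) (T2 : measurableType d2) (P2 : probability T2 R)
  (Y : {RV P1 >-> R}) (Z : {RV P2 >-> R}) (a b : R) :
  0 < a ->
  continuous (distfun Y) ->
  (forall w, exists k : int, a * (Z w - b) = k%:~R) ->
  (Z : T2 -> R) \in Lfun P2 2%:E ->
  dKS Y Z >= 1 / (12 * a * Num.sqrt (fine 'V_P2[Z]) + 8).
Proof.
move=> a_gt0 cY Z_lattice Z2.
set v := fine 'V_P2[Z]; set sigma := Num.sqrt v.
have sigma_ge0 : 0 <= sigma by exact: sqrtr_ge0.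
have v_sigma : v = sigma ^+ 2 by rewrite sqr_sqrtr // fine_ge0 // variance_ge0.
set N := (Num.truncn (4 * a * sigma)).+2.
have [N_gt N_le] : 4 * a * sigma < N%:R /\ N%:R <= 4 * a * sigma + 2.
  have := truncnS_gt (4 * a * sigma); have : (Num.truncn (4 * a * sigma))%:R <= 4 * a * sigma.
    by rewrite truncn_le !mulr_ge0 // ltW.
  by rewrite /N -addn2 -addn1 !natrD; lra.
have lattice_bound := lattice_chebyshev a_gt0 Z_lattice N _ isT Z2
  (fun z => atom_le_dKS Y Z z cY).
have tail_le : (2 * a / N%:R) ^+ 2 * v <= 1 / 4.
  have ratio_ge0 : 0 <= 2 * a * sigma / N%:R by rewrite !mulr_ge0 // ltW.
  have ratio_le : 2 * a * sigma / N%:R <= 1 / 2 by rewrite ler_pdivrMr ?ltr0n //; lra.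
  by rewrite v_sigma -exprMn mulrAC; nra.
have := dKS_ge0 Y Z; set delta := dKS Y Z => delta_ge0.
have := ler_wpM2l delta_ge0 N_le; rewrite ler_pdivrMr; last by nra.
move: lattice_bound; rewrite -/v -/delta; nra.
Qed.
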